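(* Let $G$ be a locally compact groupoid. Then $G$ acts properly on itself (by right multiplication) if and only if $G^{(0)}$ is Hausdorff. In particular, a locally compact space, viewed as a groupoid consisting only of units, is proper if and only if it is Hausdorff.
   Context: Locally compact: every point has a compact (quasi-compact Hausdorff) neighbourhood; the space need not be Hausdorff. A continuous map is proper if closed with quasi-compact fibres; a groupoid $H$ is proper if $(r,s)\colon H\to H^{(0)}\times H^{(0)}$ is proper. The right action of $G$ on itself has momentum map $s$ and is $(h,g)\mapsto hg$; it is proper if the groupoid $G\rtimes G=\{(h,g):s(h)=r(g)\}$ (units $G$, range $(h,g)\mapsto h$, source $(h,g)\mapsto hg$) is proper. *)

From mathcomp Require Import all_boot all_classical.
From mathcomp Require Import topology.
Set Implicit Arguments. Unset Strict Implicit. Unset Printing Implicit Defensive.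
Local Open Scope classical_set_scope.

Definition hausdorff_subset (X : topologicalType) (K : set X) : Prop :=
  forall x y, K x -> K y -> x <> y ->
    exists U V : set X, [/\ open U, open V, U x, V y & U `&` V `&` K = set0].

(* Locally compact in the paper's (non-Hausdorff) sense: every point has a
   compact neighbourhood, "compact" meaning quasi-compact and Hausdorff. *)
Definition lc_space (X : topologicalType) : Prop :=
  forall x : X, exists K : set X, [/\ nbhs x K, compact K & hausdorff_subset K].

Definition closed_in (X : topologicalType) (A C : set X) : Prop :=
  exists D : set X, closed D /\ C = A `&` D.

Definition proper_on (X Y : topologicalType) (A : set X) (f : X -> Y) : Prop :=
  [/\ {within A, continuous f},
      (forall C, C `<=` A -> closed_in A C -> closed (f @` C)) &
      (forall y : Y, compact (A `&` f @^-1` [set y]))].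

(* Topological groupoid with arrow space G and unit space G0; u : G0 -> G is
   the unit inclusion (automatically a topological embedding, since r o u = id).
   mul g h is meaningful when s g = r h. *)
Definition is_top_groupoid (G G0 : topologicalType) (r s : G -> G0) (u : G0 -> G)
    (mul : G -> G -> G) (inv : G -> G) : Prop :=
  [/\ (forall x, r (u x) = x /\ s (u x) = x),
      (forall g h, s g = r h -> r (mul g h) = r g /\ s (mul g h) = s h),
      (forall g h k, s g = r h -> s h = r k -> mul (mul g h) k = mul g (mul h k)),
      (forall g, mul (u (r g)) g = g /\ mul g (u (s g)) = g) &
      (forall g, [/\ r (inv g) = s g, s (inv g) = r g,
                     mul g (inv g) = u (r g) & mul (inv g) g = u (s g)])] /\
  [/\ [/\ continuous r, continuous s, continuous u & continuous inv] &
      {within [set p : G * G | s p.1 = r p.2], continuous (fun p => mul p.1 p.2)}].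

Definition groupoid_proper (H H0 : topologicalType) (r s : H -> H0) : Prop :=
  proper_on setT (fun h => (r h, s h)).

(* The right action of G on itself is proper: the action groupoid
   G ⋊ G = {(h,g) : s h = r g} (subspace of G x G), with range (h,g) |-> h and
   source (h,g) |-> hg, is proper. *)
Definition self_action_proper (G G0 : topologicalType) (r s : G -> G0)
    (mul : G -> G -> G) : Prop :=
  proper_on [set p : G * G | s p.1 = r p.2] (fun p => (p.1, mul p.1 p.2)).

From mathcomp Require Import all_boot all_classical.
From mathcomp Require Import topology.
Set Implicit Arguments. Unset Strict Implicit. Unset Printing Implicit Defensive.
Local Open Scope classical_set_scope.

(* The map (h, g) |-> (h, hg) on composable pairs is injective, and it is a
   homeomorphism onto the pairs with a common range, {(h, k) | r h = r k}, with
   inverse (h, k) |-> (h, h^-1 k).  Such a map is proper exactly when its image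
   is closed.  That image is the preimage of the diagonal of G0 under r x r,
   and the diagonal is in turn its preimage under u x u, so it is closed iff
   the diagonal of G0 is closed, i.e. iff G0 is Hausdorff.  The unit space case
   is the same argument with r = u = id. *)

Lemma id_continuous {T : topologicalType} : continuous (@id T).
Proof. by move=> x; exact: cvg_id. Qed.

Lemma fst_continuous {X Y : topologicalType} : continuous (@fst X Y).
Proof. by move=> [x y]; exact: cvg_fst. Qed.

Lemma snd_continuous {X Y : topologicalType} : continuous (@snd X Y).
Proof. by move=> [x y]; exact: cvg_snd. Qed.

Lemma prod_map_continuous {X X' Y Y' : topologicalType} (f : X -> Y) (g : X' -> Y') :
  continuous f -> continuous g -> continuous (fun p => (f p.1, g p.2)).
Proof.
move=> cf cg [x y]; apply: cvg_pair.
- exact: (continuous_comp (@fst_continuous _ _ (x, y)) (cf x)).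
- exact: (continuous_comp (@snd_continuous _ _ (x, y)) (cg y)).
Qed.

Lemma within_continuous_pair {X Y Z : topologicalType} (A : set X)
    (f : X -> Y) (g : X -> Z) :
  {within A, continuous f} -> {within A, continuous g} ->
  {within A, continuous (fun x => (f x, g x))}.
Proof.
move=> /subspace_continuousP cf /subspace_continuousP cg.
by apply/subspace_continuousP => x Ax; exact: cvg_pair (cf x Ax) (cg x Ax).
Qed.

Lemma within_continuous_comp_subspace {X Y Z : topologicalType}
    (A : set X) (B : set Y) (f : X -> Y) (g : Y -> Z) :
  {homo f : x / A x >-> B x} ->
  {within A, continuous f} -> {within B, continuous g} ->
  {within A, continuous (g \o f)}.
Proof.
move=> fAB /subspace_continuousP cf /subspace_continuousP cg.
apply/subspace_continuousP => x Ax; apply: cvg_comp (cg _ (fAB _ Ax)).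
move=> W /(cf x Ax); apply: (@filterS _ (nbhs x)) => y BW Ay.
exact: BW Ay (fAB _ Ay).
Qed.

Lemma hausdorff_closed_diagonal {T : topologicalType} :
  hausdorff_space T <-> closed (@diagonal T).
Proof.
split=> [haus [p q] cl | cD p q cl].
  apply: haus => P Q Pp Qq.
  have [[a b] [/diagonalP <- [Pa Qa]]] : diagonal `&` (P `*` Q) !=set0.
    by apply: cl; exists (P, Q).
  by exists a.
apply: (cD (p, q)) => W [[P Q] [/= Pp Qq] PQW].
have [z [Pz Qz]] := cl P Q Pp Qq.
by exists (z, z); split => //; exact: PQW.
Qed.

Lemma closed_kernel_pairP {G G0 : topologicalType} (r : G -> G0) (u : G0 -> G) :
  continuous r -> continuous u -> cancel u r ->
  closed [set p : G * G | r p.1 = r p.2] <-> hausdorff_space G0.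
Proof.
move=> cr cu ur; rewrite hausdorff_closed_diagonal; split=> cl.
  have -> : @diagonal G0 = (fun p => (u p.1, u p.2)) @^-1` [set p | r p.1 = r p.2].
    by apply/seteqP; split=> -[x y]; rewrite /= !ur.
  exact: (continuous_closedP _).1 (prod_map_continuous cu cu) _ cl.
exact: (continuous_closedP _).1 (prod_map_continuous cr cr) _ cl.
Qed.

Section ProperEmbedding.
Variables (X Y : topologicalType) (A : set X) (f : X -> Y) (g : Y -> X).
Hypotheses (f_cont : {within A, continuous f})
  (g_cont : {within f @` A, continuous g}) (fK : {in A, cancel f g}).

Lemma closed_in_image (C : set X) :
  closed (f @` A) -> closed_in A C -> closed (f @` C).
Proof.
move=> cfA [D [cD ->]].
have -> : f @` (A `&` D) = f @` A `&` g @^-1` D.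
  apply/seteqP; split=> [_ [a [Aa Da] <-] | _ [[a Aa <-] /= Dgfa]].
    by split; [exists a | rewrite /= fK // inE].
  by exists a => //; split; rewrite // -(fK (mem_set Aa)).
have /closed_subspaceP [V cV VE] : closed (g @^-1` D : set (subspace (f @` A))).
  exact: (continuous_closedP _).1 g_cont _ cD.
by rewrite setIC -VE; exact: closedI.
Qed.

Lemma proper_on_embeddingP : proper_on A f <-> closed (f @` A).
Proof.
split=> [[_ f_closed _] | cfA].
  by apply: f_closed => //; exists setT; split; [exact: closedT | rewrite setIT].
split=> // [C _ | y]; first exact: closed_in_image.
apply: finite_compact; apply: sub_finite_set (finite_set1 (g y)).
by move=> a [Aa /= <-]; rewrite /= fK // inE.
Qed.

End ProperEmbedding.

Section SelfAction.
Variables (G G0 : topologicalType) (r s : G -> G0) (u : G0 -> G)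
  (mul : G -> G -> G) (inv : G -> G).
Hypothesis groupoidG : is_top_groupoid r s u mul inv.

Lemma unitK : cancel u r.
Proof. by case: groupoidG => -[ru _ _ _ _] _ x; case: (ru x). Qed.

Lemma r_mul g h : s g = r h -> r (mul g h) = r g.
Proof. by case: groupoidG => -[_ rs_mul _ _ _] _ /rs_mul[]. Qed.

Lemma r_inv g : r (inv g) = s g.
Proof. by case: groupoidG => -[_ _ _ _ /(_ g)[]]. Qed.

Lemma s_inv g : s (inv g) = r g.
Proof. by case: groupoidG => -[_ _ _ _ /(_ g)[]]. Qed.

Lemma inv_mulK g h : s g = r h -> mul (inv g) (mul g h) = h.
Proof.
case: groupoidG => -[_ _ mulA unit_mul inv_ax] _ sgh.
have [_ _ _ invg_g] := inv_ax g.
by rewrite -mulA ?s_inv // invg_g sgh; case: (unit_mul h).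
Qed.

Lemma mul_invK g k : r g = r k -> mul g (mul (inv g) k) = k.
Proof.
case: groupoidG => -[_ _ mulA unit_mul inv_ax] _ rgk.
have [_ _ g_invg _] := inv_ax g.
by rewrite -mulA ?s_inv ?r_inv // g_invg rgk; case: (unit_mul k).
Qed.

Definition composable := [set p : G * G | s p.1 = r p.2].
Definition same_range := [set p : G * G | r p.1 = r p.2].
Definition action_map (p : G * G) := (p.1, mul p.1 p.2).
Definition action_map_inv (p : G * G) := (p.1, mul (inv p.1) p.2).

Lemma action_map_image : action_map @` composable = same_range.
Proof.
apply/seteqP; split=> [_ [[h g] /= sgh <-] | [h k] rhk].
  by rewrite /same_range /= r_mul.
move: rhk; rewrite /same_range /= => rhk.
exists (h, mul (inv h) k); last by rewrite /action_map /= mul_invK.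
by rewrite /composable /= r_mul ?r_inv ?s_inv.
Qed.

Lemma action_mapK : {in composable, cancel action_map action_map_inv}.
Proof. by move=> [h g] /set_mem sgh; rewrite /action_map_inv /= inv_mulK. Qed.

Lemma action_map_continuous : {within composable, continuous action_map}.
Proof.
case: groupoidG => _ [_ mul_cont].
exact: within_continuous_pair (continuous_subspaceT fst_continuous) mul_cont.
Qed.

Lemma action_map_inv_continuous : {within same_range, continuous action_map_inv}.
Proof.
case: groupoidG => _ [[_ _ _ inv_cont] mul_cont].
have inv1_composable : {homo (fun p => (inv p.1, p.2)) : p / same_range p >-> composable p}.
  by move=> [h k] rhk; rewrite /composable /= s_inv.
have inv1_cont : {within same_range, continuous (fun p : G * G => (inv p.1, p.2))}.
  exact/continuous_subspaceT/(prod_map_continuous inv_cont id_continuous).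
have := within_continuous_comp_subspace inv1_composable inv1_cont mul_cont.
exact: within_continuous_pair (continuous_subspaceT fst_continuous).
Qed.

Lemma self_action_properP : self_action_proper r s mul <-> hausdorff_space G0.
Proof.
case: groupoidG => _ [[r_cont _ u_cont _] _].
rewrite -(closed_kernel_pairP r_cont u_cont unitK) -[X in closed X]action_map_image.
apply: proper_on_embeddingP action_map_continuous _ action_mapK.
by rewrite action_map_image; exact: action_map_inv_continuous.
Qed.

End SelfAction.

Section UnitSpace.
Variable X : topologicalType.

Lemma unit_space_groupoid :
  is_top_groupoid (@id X) (@id X) (@id X) (fun g _ => g) (@id X).
Proof.
split; first by split.
split; first by split; exact: id_continuous.
exact/continuous_subspaceT/fst_continuous.
Qed.

Lemma unit_space_properP : groupoid_proper (@id X) (@id X) <-> hausdorff_space X.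
Proof.
have diag_image : (fun x : X => (x, x)) @` setT = [set p | p.1 = p.2].
  by apply/seteqP; split=> [_ [x _ <-] // | [x y] /= <-]; exists x.
have diag_cont : {within setT, continuous (fun x : X => (x, x))}.
  by apply: continuous_subspaceT => x; exact: cvg_pair cvg_id cvg_id.
have fst_cont : {within (fun x : X => (x, x)) @` setT, continuous fst}.
  exact: continuous_subspaceT fst_continuous.
have diagK : {in setT, cancel (fun x : X => (x, x)) fst} by [].
rewrite -(closed_kernel_pairP id_continuous id_continuous (fun x : X => erefl x)).
by rewrite -diag_image; exact: proper_on_embeddingP diag_cont fst_cont diagK.
Qed.

End UnitSpace.

Theorem proposition2p16 :
  (forall (G G0 : topologicalType) (r s : G -> G0) (u : G0 -> G)
          (mul : G -> G -> G) (inv : G -> G),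
     is_top_groupoid r s u mul inv -> lc_space G ->
     (self_action_proper r s mul <-> hausdorff_space G0))
  /\
  (forall X : topologicalType, lc_space X ->
     (is_top_groupoid (@id X) (@id X) (@id X) (fun g _ => g) (@id X) /\
      (groupoid_proper (@id X) (@id X) <-> hausdorff_space X))).
Proof.
split=> [G G0 r s u mul inv groupoidG _ | X _].
  exact: self_action_properP groupoidG.
by split; [exact: unit_space_groupoid | exact: unit_space_properP].
Qed.
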